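(* Let $\mathcal U$ be a finite set, $R_0,\dots,R_{k-1}$ be $n$-place relations on $\mathcal U$, and let $R$ be an $n$-place relation on $\mathcal U$ which is a Boolean combination of $R_0,\dots,R_{k-1}$. Then $\lambda'_0(R)\le\sum_{\ell<k}\lambda'_0(R_\ell)$, and hence $\lambda_0(R)\le\sum_{\ell<k}\lambda_0(R_\ell)$.
   Context: For $A\subseteq\mathcal U$ and $n$-tuples $\bar b=\langle b_i\rangle,\bar c=\langle c_i\rangle$ from $\mathcal U$, $\bar b\approx_A\bar c$ means: $b_i\in A\iff c_i\in A$; $b_i\in A\Rightarrow b_i=c_i$; and $b_i=b_j\iff c_i=c_j$. For an $n$-place relation $S$ on $\mathcal U$, $\lambda'_0(S)$ is the least $|A|$ over $A\subseteq\mathcal U$ such that for all $n$-tuples $\bar b,\bar c$ from $\mathcal U$, $\bar b\approx_A\bar c$ implies ($S(\bar b)\iff S(\bar c)$); and $\lambda_0(S)=\min\{\lfloor|\mathcal U|/2\rfloor,\lambda'_0(S)\}$. *)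

From mathcomp Require Import all_boot.
Set Implicit Arguments. Unset Strict Implicit. Unset Printing Implicit Defensive.

Definition rel_n (U : finType) (n : nat) := n.-tuple U -> bool.

Definition approx (U : finType) (n : nat) (A : {set U}) (b c : n.-tuple U) : bool :=
  [&& [forall i : 'I_n, (tnth b i \in A) == (tnth c i \in A)],
      [forall i : 'I_n, (tnth b i \in A) ==> (tnth b i == tnth c i)] &
      [forall i : 'I_n, forall j : 'I_n, (tnth b i == tnth b j) == (tnth c i == tnth c j)]].

Definition supports (U : finType) (n : nat) (S : rel_n U n) (A : {set U}) : bool :=
  [forall b : n.-tuple U, forall c : n.-tuple U, approx A b c ==> (S b == S c)].

(* λ'_0(S): least |A| over supporting A (A = U always supports, so the
   min with default #|U| is the true minimum). *)
Definition lambda0' (U : finType) (n : nat) (S : rel_n U n) : nat :=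
  \big[minn/#|U|]_(A : {set U} | supports S A) #|A|.

Definition lambda0 (U : finType) (n : nat) (S : rel_n U n) : nat :=
  minn (#|U| %/ 2) (lambda0' S).

Definition bool_comb (U : finType) (n k : nat) (Rs : 'I_k -> rel_n U n) (R : rel_n U n) : Prop :=
  exists f : {ffun 'I_k -> bool} -> bool,
    forall b : n.-tuple U, R b = f [ffun l => Rs l b].

(* Shrinking A only weakens the relation b ≈_A c, so a set supporting S
   keeps supporting it when enlarged.  If each R_l is supported by A_l, the
   union of the A_l supports all the R_l at once, hence every Boolean
   combination of them; taking the A_l of minimal size gives the bound on
   λ'_0.  Truncation at |U|/2 is subadditive, which transfers the bound to λ_0. *)
From mathcomp Require Import all_boot zify.
Set Implicit Arguments. Unset Strict Implicit. Unset Printing Implicit Defensive.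

Lemma bigminn_le (I : eqType) (r : seq I) (P : pred I) (F : I -> nat) m i :
  i \in r -> P i -> \big[minn/m]_(j <- r | P j) F j <= F i.
Proof.
move=> + Pi; elim: r => // j r IH; rewrite big_cons inE.
case/orP=> [/eqP<- | /IH]; first by rewrite Pi geq_minl.
by case: ifP => // _; apply: leq_trans (geq_minr _ _).
Qed.

Section Supports.

Variables (U : finType) (n : nat).
Implicit Types (A B : {set U}) (b c : n.-tuple U) (S : rel_n U n).

Lemma approx_subset A B b c : A \subset B -> approx B b c -> approx A b c.
Proof.
move=> /subsetP sAB /and3P[/forallP memE /forallP eqE eq_pattern].
have eq_inA i : tnth b i \in A -> tnth b i = tnth c i.
  by move=> bA; have /implyP/(_ (sAB _ bA))/eqP := eqE i.
apply/and3P; split=> //; apply/forallP=> i; last by apply/implyP=> /eq_inA->.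
case bA: (tnth b i \in A); first by rewrite -(eq_inA i bA) bA.
case cA: (tnth c i \in A) => //.
have /eqP bB := memE i; rewrite (sAB _ cA) in bB.
by have /implyP/(_ bB)/eqP bc := eqE i; rewrite bc cA in bA.
Qed.

Lemma supportsS S A B : A \subset B -> supports S A -> supports S B.
Proof.
move=> sAB /forallP suppA; apply/forallP=> b; apply/forallP=> c.
by apply/implyP=> /(approx_subset sAB); have /forallP/(_ c)/implyP := suppA b.
Qed.

Lemma supportsT S : supports S [set: U].
Proof.
apply/forallP=> b; apply/forallP=> c; apply/implyP=> /and3P[_ /forallP eqE _].
suff -> : b = c by [].
by apply: eq_from_tnth => i; have /implyP/(_ (in_setT _))/eqP := eqE i.
Qed.

Lemma lambda0'_min S A : supports S A -> lambda0' S <= #|A|.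
Proof. exact: bigminn_le (mem_index_enum A). Qed.

Lemma lambda0'_attained S : exists2 A, supports S A & #|A| = lambda0' S.
Proof.
rewrite /lambda0'; elim/big_ind: _ => [| x y [A ? <-] [B ? <-] | A suppA].
- by exists [set: U]; rewrite ?supportsT ?cardsT.
- by rewrite /minn; case: ltnP; [exists A | exists B].
- by exists A.
Qed.

Lemma supports_bool_comb k (Rs : 'I_k -> rel_n U n) R (As : 'I_k -> {set U}) :
  bool_comb Rs R -> (forall l, supports (Rs l) (As l)) ->
  supports R (\bigcup_l As l).
Proof.
move=> [f Rf] suppAs; apply/forallP=> b; apply/forallP=> c; apply/implyP=> bc.
rewrite !Rf; apply/eqP; congr f; apply/ffunP=> l; rewrite !ffunE; apply/eqP.
have suppU := supportsS (bigcup_sup l isT) (suppAs l).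
by have /forallP/(_ b)/forallP/(_ c)/implyP-> := suppU.
Qed.

End Supports.

Lemma card_bigcup_le (T : finType) (I : Type) (r : seq I) (P : pred I)
    (F : I -> {set T}) :
  #|\bigcup_(i <- r | P i) F i| <= \sum_(i <- r | P i) #|F i|.
Proof.
elim/big_rec2: _ => [|i m A _ IH]; first by rewrite cards0.
exact: leq_trans (leq_card_setU _ _) (leq_add _ IH).
Qed.

Lemma minn_sum_le (I : Type) (r : seq I) (P : pred I) (F : I -> nat) m :
  minn m (\sum_(i <- r | P i) F i) <= \sum_(i <- r | P i) minn m (F i).
Proof. by elim/big_rec2: _ => [|i x y _]; rewrite ?minn0 //; lia. Qed.

Theorem claim2p6 (U : finType) (n k : nat) (Rs : 'I_k -> rel_n U n) (R : rel_n U n) :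
  bool_comb Rs R ->
  lambda0' R <= \sum_(l < k) lambda0' (Rs l) /\
  lambda0 R <= \sum_(l < k) lambda0 (Rs l).
Proof.
move=> combR.
have [As suppAs cardAs] := fin_all_exists2 (fun l => lambda0'_attained (Rs l)).
have le_lambda0' : lambda0' R <= \sum_(l < k) lambda0' (Rs l).
  rewrite -(eq_bigr _ (fun l _ => cardAs l)).
  exact: leq_trans (lambda0'_min (supports_bool_comb combR suppAs)) (card_bigcup_le _ _ _).
split=> //; apply: leq_trans (minn_sum_le _ _ _ (#|U| %/ 2)).
by rewrite leq_min geq_minl (leq_trans (geq_minr _ _) le_lambda0').
Qed.
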